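(* Let $\Omega\subset\mathbb{R}^d$ be an unbounded closed convex set and let $W,V\in C^1(\mathbb{R}^d)$ with $W$ $\lambda_W$-geodesically convex on $\Omega-\Omega$, $V$ $\lambda_V$-geodesically convex on $\Omega$, and $|\nabla W(x)|\le C_0(1+|x|)$, $|\nabla V(x)|\le C_0(1+|x|)$ for all $x$. Then there is a constant $C=C(W,V)>0$ (independent of $n$ and of the number of particles) such that the following holds: if $n\in\mathbb{N}$, $x^n_1,\dots,x^n_{k}\in\Omega\cap B(n)$, $m^n_i\ge0$ with $\sum_im^n_i=1$, $(x^n_i(t))_i$ is a locally absolutely continuous solution of $\dot x^n_i(t)=P_{x^n_i(t)}\big(-\sum_jm^n_j\nabla W(x^n_i(t)-x^n_j(t))-\nabla V(x^n_i(t))\big)$, $x^n_i(0)=x^n_i$, and $\mu^n(t)=\sum_im^n_i\delta_{x^n_i(t)}$, then $\mathrm{supp}(\mu^n(t))\subset\Omega\cap B(r(t))$ for all $t\ge0$ with $r(t)\le(n+1)\exp(Ct)$.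
   Context: $B(r)$ is the ball of radius $r$ centered at the origin. $T(\Omega,x)$ is the tangent cone of the convex set $\Omega$ at $x$ (closure of $\{s(y-x):s\ge0,y\in\Omega\}$) and $P_x(w)$ its nearest point to $w$. $\lambda$-geodesic convexity on convex $K$: $f(y)\ge f(x)+\langle\nabla f(x),y-x\rangle+\frac\lambda2|y-x|^2$ on $K$. *)

From HB Require Import structures.
From mathcomp Require Import all_boot all_order all_algebra.
From mathcomp Require Import all_classical all_reals all_analysis.
Set Implicit Arguments. Unset Strict Implicit. Unset Printing Implicit Defensive.
Import Order.TTheory GRing.Theory Num.Theory.
Import numFieldNormedType.Exports.
Local Open Scope classical_set_scope.
Local Open Scope ring_scope.

Section Defs.
Variables (R : realType) (d : nat).
Notation vec := 'rV[R]_d.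

Definition dotv (x y : vec) : R := \sum_(j < d) x 0 j * y 0 j.
Definition enorm (x : vec) : R := Num.sqrt (dotv x x).

Definition eball0 (r : R) : set vec := [set x | enorm x < r].

Definition evec (j : 'I_d) : vec := \row_(k < d) (if k == j then 1 else 0).

Definition grad (f : vec -> R) (x : vec) : vec :=
  \row_(j < d) ('D_(evec j) f x).

Definition C1 (f : vec -> R) : Prop :=
  (forall x, differentiable f x) /\ continuous (grad f).

Definition diffset (K : set vec) : set vec :=
  [set z | exists x y, K x /\ K y /\ z = x - y].

Definition lam_convex_on (K : set vec) (lam : R) (f : vec -> R) : Prop :=
  forall x y, K x -> K y ->
    f x + dotv (grad f x) (y - x) + lam / 2 * (enorm (y - x)) ^+ 2 <= f y.

Definition tcone (K : set vec) (x : vec) : set vec :=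
  closure [set v | exists s y, 0 <= s /\ K y /\ v = s *: (y - x)].

Definition nearest (S : set vec) (w p : vec) : Prop :=
  S p /\ forall q, S q -> enorm (w - p) <= enorm (w - q).

Definition abs_cont_on (a b : R) (f : R -> vec) : Prop :=
  forall e : R, 0 < e -> exists2 del : R, 0 < del &
    forall (n : nat) (s : 'I_n -> R * R),
      (forall i, a <= (s i).1 /\ (s i).1 <= (s i).2 /\ (s i).2 <= b) ->
      (forall i j, i != j -> (s i).2 <= (s j).1 \/ (s j).2 <= (s i).1) ->
      \sum_(i < n) ((s i).2 - (s i).1) < del ->
      \sum_(i < n) enorm (f (s i).2 - f (s i).1) < e.

Definition loc_abs_cont (f : R -> vec) : Prop :=
  forall T : R, 0 <= T -> abs_cont_on 0 T f.

(* support of the empirical measure sum_i m_i delta_{x_i} *)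
Definition supp_emp (k : nat) (m : 'I_k -> R) (x : 'I_k -> vec) : set vec :=
  [set y | exists i, 0 < m i /\ y = x i].

End Defs.

From HB Require Import structures.
From mathcomp Require Import all_boot all_order all_algebra.
From mathcomp Require Import all_classical all_reals all_analysis.
From mathcomp Require Import ring lra.
Import Order.TTheory GRing.Theory Num.Theory.
Import numFieldNormedType.Exports.
Local Open Scope classical_set_scope.
Local Open Scope ring_scope.

(* Each velocity is the nearest point to the drift in a tangent cone, which contains 0,
   so its norm is at most twice that of the drift, and by the linear growth of grad W and
   grad V it is at most 6 C0 (1 + u) with u(t) = max_i |x_i(t)|.  Hence 1 + u grows at
   most like exp (6 C0 t); the rate 6 C0 + 1 leaves room for a strict comparison.  As u is
   absolutely continuous, continuous induction on [0, T] shows that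
   u(t) + 1 - (n + 1) exp ((6 C0 + 1) t) stays negative: at the null set of times where
   the equation fails, covered by an open set of small measure, the growth of u is paid
   for by its variation on intervals of that set. *)

Section Euclid.
Context {R : realType} {d : nat}.
Implicit Types (x y : 'rV[R]_d).

Lemma dotv_ge0 x : 0 <= dotv x x.
Proof. by apply: sumr_ge0 => j _; rewrite -expr2 sqr_ge0. Qed.

Lemma enorm_ge0 x : 0 <= enorm x.
Proof. exact: sqrtr_ge0. Qed.

Lemma enorm_sq x : enorm x ^+ 2 = dotv x x.
Proof. by rewrite sqr_sqrtr // dotv_ge0. Qed.

Lemma dotvZ a x y : dotv (a *: x) y = a * dotv x y.
Proof. by rewrite /dotv mulr_sumr; apply: eq_bigr => j _; rewrite mxE mulrA. Qed.

Lemma dotvC x y : dotv x y = dotv y x.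
Proof. by apply: eq_bigr => j _; rewrite mulrC. Qed.

Lemma dotvDl x y z : dotv (x + y) z = dotv x z + dotv y z.
Proof. by rewrite /dotv -big_split; apply: eq_bigr => j _; rewrite mxE mulrDl. Qed.

Lemma enormZ a x : enorm (a *: x) = `|a| * enorm x.
Proof.
rewrite /enorm dotvZ (dotvC x) dotvZ mulrA -expr2 sqrtrM ?sqr_ge0 //.
by rewrite sqrtr_sqr.
Qed.

Lemma enormN x : enorm (- x) = enorm x.
Proof. by rewrite -scaleN1r enormZ normrN normr1 mul1r. Qed.

Lemma enorm0 : enorm (0 : 'rV[R]_d) = 0.
Proof. by rewrite -(scale0r (0 : 'rV_d)) enormZ normr0 mul0r. Qed.

Lemma enorm_subC x y : enorm (x - y) = enorm (y - x).
Proof. by rewrite -enormN opprB. Qed.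

Lemma enorm_eq0_entry x : enorm x = 0 -> forall j, x 0 j = 0.
Proof.
move=> x0 j; have /eqP : dotv x x = 0 by rewrite -enorm_sq x0 expr0n.
rewrite psumr_eq0; last by move=> i _; rewrite -expr2 sqr_ge0.
by move=> /allP /(_ j (mem_index_enum j)) /=; rewrite mulf_eq0 orbb => /eqP.
Qed.

Lemma dotv_le_enorm x y : dotv x y <= enorm x * enorm y.
Proof.
have dotv0 (z w : 'rV[R]_d) : enorm z = 0 -> dotv z w = 0.
  by move=> z0; apply: big1 => j _; rewrite (enorm_eq0_entry _ z0) mul0r.
have [x0|x0] := eqVneq (enorm x) 0; first by rewrite x0 mul0r dotv0.
have [y0|y0] := eqVneq (enorm y) 0; first by rewrite y0 mulr0 dotvC dotv0.
set a := enorm x; set b := enorm y.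
have a_gt0 : 0 < a by rewrite lt_def x0 enorm_ge0.
have b_gt0 : 0 < b by rewrite lt_def y0 enorm_ge0.
(* expand [0 <= |b x - a y|^2] coordinatewise *)
have H : \sum_(j < d) (2 * a * b * (x 0 j * y 0 j)) <=
         \sum_(j < d) (b ^+ 2 * (x 0 j * x 0 j) + a ^+ 2 * (y 0 j * y 0 j)).
  apply: ler_sum => j _; have := sqr_ge0 (b * x 0 j - a * y 0 j); nra.
rewrite -mulr_sumr big_split /= -!mulr_sumr -!/(dotv _ _) -!enorm_sq -/a -/b in H.
have : 0 < a * b by rewrite mulr_gt0.
nra.
Qed.

Lemma enormD x y : enorm (x + y) <= enorm x + enorm y.
Proof.
have : enorm (x + y) ^+ 2 <= (enorm x + enorm y) ^+ 2.
  rewrite enorm_sq dotvDl (dotvC x) (dotvC y) !dotvDl -!enorm_sq (dotvC y x).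
  have := dotv_le_enorm x y; nra.
have := enorm_ge0 (x + y); have := enorm_ge0 x; have := enorm_ge0 y; nra.
Qed.

Lemma enormB x y : enorm (x - y) <= enorm x + enorm y.
Proof. by rewrite (le_trans (enormD _ _)) // enormN. Qed.

Lemma enorm_sum (I : Type) (r : seq I) (P : pred I) (F : I -> 'rV[R]_d) :
  enorm (\sum_(i <- r | P i) F i) <= \sum_(i <- r | P i) enorm (F i).
Proof.
apply: (big_ind2 (fun v c => enorm v <= c)) => //; first by rewrite enorm0.
by move=> v1 c1 v2 c2 h1 h2; rewrite (le_trans (enormD _ _)) // lerD.
Qed.

Lemma enorm_le_mx_norm x : enorm x <= d%:R * `|x|.
Proof.
have entry_le j : x 0 j * x 0 j <= `|x| ^+ 2.
  rewrite -expr2 -real_normK ?num_real //; apply: lerXn2r; rewrite ?nnegrE //.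
  rewrite [`|x|]mx_normrE.
  exact: (le_bigmax _ (fun ij : 'I_1 * 'I_d => `|x ij.1 ij.2|) (0, j)).
have : dotv x x <= d%:R * `|x| ^+ 2.
  rewrite (le_trans (ler_sum _ (fun j _ => entry_le j))) //.
  by rewrite sumr_const card_ord mulr_natl.
move=> /ler_wsqrtr /le_trans; apply.
have : d%:R * `|x| ^+ 2 <= (d%:R * `|x|) ^+ 2.
  rewrite exprMn ler_wpM2r ?sqr_ge0 //.
  by case: (d) => [|d']; rewrite ?expr0n // expr2 ler_peMl ?ler0n // ler1n.
move=> /ler_wsqrtr /le_trans; apply.
by rewrite sqrtr_sqr ger0_norm // mulr_ge0.
Qed.

Lemma derivable_remainder_enorm {f : R -> 'rV[R]_d} {t : R} : derivable f t 1 ->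
  forall e, 0 < e -> exists2 del, 0 < del & forall s, `|s - t| < del ->
    enorm (f s - f t - (s - t) *: 'D_1 f t) <= e * `|s - t|.
Proof.
move=> df e e_gt0.
(* the sup norm of the remainder is made small enough to absorb [enorm <= d * sup norm] *)
have e'_gt0 : 0 < e / (d%:R + 1) by rewrite divr_gt0 // ltr_wpDl.
have [del del_gt0 Hd] : exists2 del : R, 0 < del & forall h : R, ball 0 del h ->
    h != 0 -> `|'D_1 f t - h^-1 *: (f (h%:A + t) - f t)| < e / (d%:R + 1).
  have := (cvgrPdist_lt _ _).1 df _ e'_gt0; move=> /(_ _).
  by rewrite /dnbhs /within /= => /nbhs_ballP[r r0 Hr]; exists r.
exists del => // s st.
have [->|s_neq_t] := eqVneq s t.
  by rewrite !subrr normr0 mulr0 scale0r subr0 enorm0.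
have h_neq0 : s - t != 0 by rewrite subr_eq0.
have := Hd (s - t); rewrite /ball /= sub0r normrN => /(_ st h_neq0).
rewrite [_%:A]mulr1 subrK.
set D := 'D_1 f t; set h := s - t => Hlt.
have -> : f s - f t - h *: D = - (h *: (D - h^-1 *: (f s - f t))).
  by rewrite scalerBr scalerA mulfV // scale1r opprB.
rewrite enormN (le_trans (enorm_le_mx_norm _)) // mx_normZ mulrCA (mulrC e).
apply: ler_wpM2l => //.
rewrite (le_trans (ler_wpM2l (ler0n _ d) (ltW Hlt))) //.
by rewrite mulrA ler_pdivrMr ?ltr_wpDl // mulrC ler_wpM2l ?(ltW e_gt0) // lerDl.
Qed.

End Euclid.

Section IntervalFamilies.
Context {R : realType}.
Notation mu := (@lebesgue_measure R).
Implicit Types (L : seq (R * R)) (f : R -> R) (O : set R).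

Definition abs_cont_real (a b : R) f :=
  forall e : R, 0 < e -> exists2 del : R, 0 < del &
    forall (n : nat) (s : 'I_n -> R * R),
      (forall i, a <= (s i).1 /\ (s i).1 <= (s i).2 /\ (s i).2 <= b) ->
      (forall i j, i != j -> (s i).2 <= (s j).1 \/ (s j).2 <= (s i).1) ->
      \sum_(i < n) ((s i).2 - (s i).1) < del ->
      \sum_(i < n) `|f (s i).2 - f (s i).1| < e.

Local Notation itv L i := (nth (0, 0) L i).

Definition sorted_itvs L :=
  (forall i j, (i < j < size L)%N -> (itv L i).2 <= (itv L j).1) /\
  (forall i, (i < size L)%N -> (itv L i).1 <= (itv L i).2).

Definition itvs_union L : set R :=
  [set z | exists2 i, (i < size L)%N & (itv L i).1 < z <= (itv L i).2].

Definition itvs_length L := \sum_(i < size L) ((itv L i).2 - (itv L i).1).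

Definition itvs_variation f L := \sum_(i < size L) `|f (itv L i).2 - f (itv L i).1|.

Definition itvs_within a y O L :=
  [/\ sorted_itvs L,
      (forall i, (i < size L)%N -> a <= (itv L i).1 /\ (itv L i).2 <= y) &
      (forall i, (i < size L)%N -> `](itv L i).1, (itv L i).2]%classic `<=` O)].

Lemma itv_rcons_last L p : itv (rcons L p) (size L) = p.
Proof. by rewrite nth_rcons ltnn eqxx. Qed.

Lemma itv_rcons {L} p {i} : (i < size L)%N -> itv (rcons L p) i = itv L i.
Proof. by move=> iL; rewrite nth_rcons iL. Qed.

Lemma big_ord_rcons (V : nmodType) L p (F : R * R -> V) :
  \sum_(i < size (rcons L p)) F (itv (rcons L p) i) =
  \sum_(i < size L) F (itv L i) + F p.
Proof.
rewrite size_rcons big_ord_recr /= itv_rcons_last; congr (_ + _).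
by apply: eq_bigr => i _; rewrite itv_rcons.
Qed.

Lemma sorted_itvs_rcons L p : sorted_itvs (rcons L p) ->
  [/\ sorted_itvs L, p.1 <= p.2 & forall i, (i < size L)%N -> (itv L i).2 <= p.1].
Proof.
move=> [sorted le12]; rewrite size_rcons in sorted le12; split.
- split=> [i j /andP[ij jL]|i iL].
    have iL := ltn_trans ij jL.
    by rewrite -(itv_rcons p iL) -(itv_rcons p jL) sorted // ij ltnW.
  by rewrite -(itv_rcons p iL) le12 // ltnW.
- by rewrite -(itv_rcons_last L p) le12.
- move=> i iL; rewrite -(itv_rcons p iL) -[X in _ <= X.1](itv_rcons_last L p).
  by rewrite sorted // iL ltnSn.
Qed.

Lemma itvs_union_rcons L p : itvs_union (rcons L p) = itvs_union L `|` `]p.1, p.2]%classic.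
Proof.
apply/seteqP; split => z.
- move=> [i]; rewrite size_rcons ltnS leq_eqVlt => /orP[/eqP ->|iL].
    by rewrite itv_rcons_last => hz; right; rewrite /= in_itv.
  by rewrite itv_rcons // => hz; left; exists i.
- move=> [[i iL hz]|]; first by exists i; rewrite ?itv_rcons // size_rcons ltnS ltnW.
  by rewrite /= in_itv => hz; exists (size L); rewrite ?itv_rcons_last ?size_rcons.
Qed.

Lemma itvs_union_measure L : sorted_itvs L ->
  measurable (itvs_union L) /\ mu (itvs_union L) = (itvs_length L)%:E.
Proof.
elim/last_ind: L => [|L p IH].
  move=> _; have -> : itvs_union [::] = set0 by apply/seteqP; split => z // [].
  by rewrite measure0 /itvs_length big_ord0.
move=> /sorted_itvs_rcons[sL p12 Lp]; have [mL muL] := IH sL.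
rewrite itvs_union_rcons /itvs_length (big_ord_rcons _ _ _ (fun q : R * R => q.2 - q.1)).
split; first by apply: measurableU => //; exact: measurable_itv.
rewrite measureU //; last first.
  apply/seteqP; split => z // [[i iL /andP[_ zi]]]; rewrite /= in_itv /= => /andP[pz _].
  by rewrite ltNge (le_trans zi (Lp i iL)) in pz.
change (mu (itvs_union L) + mu `]p.1, p.2]%classic = (itvs_length L + (p.2 - p.1))%:E)%E.
rewrite muL lebesgue_measure_itv /= lte_fin.
case: ifPn => [_|]; first by rewrite !EFinD.
by rewrite -leNgt => p21; rewrite (@le_anti _ _ p.2 p.1) ?p21 // subrr !addr0.
Qed.

Lemma itvs_within_nil a y O : itvs_within a y O [::].
Proof. by split=> //; split=> // i j /andP[]. Qed.

Lemma itvs_within_widen {a x y O L} : itvs_within a x O L -> x <= y -> itvs_within a y O L.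
Proof.
move=> [sL inL LO] xy; split => // i iL; have [? ?] := inL i iL.
by split => //; exact: le_trans xy.
Qed.

Lemma itvs_within_rcons {a x y O L p} : itvs_within a x O L -> a <= x -> x <= p.1 ->
  p.1 <= p.2 -> p.2 <= y -> `]p.1, p.2]%classic `<=` O -> itvs_within a y O (rcons L p).
Proof.
move=> [[sorted le12] inL LO] ax xp1 p12 p2y pO.
have xy : x <= y by rewrite (le_trans xp1) // (le_trans p12).
have lt_last i : (i < size L)%N -> (itv L i).2 <= p.1.
  by move=> iL; rewrite (le_trans _ xp1) //; have [] := inL i iL.
split; first split.
- move=> i j; rewrite size_rcons => /andP[ij]; rewrite ltnS leq_eqVlt.
  case/orP => [/eqP jE|jL]; last by rewrite !itv_rcons ?sorted ?ij // (ltn_trans ij).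
  have iL : (i < size L)%N by rewrite -jE.
  by rewrite jE itv_rcons_last itv_rcons // lt_last.
- move=> i; rewrite size_rcons ltnS leq_eqVlt => /orP[/eqP ->|iL].
    by rewrite itv_rcons_last.
  by rewrite itv_rcons // le12.
- move=> i; rewrite size_rcons ltnS leq_eqVlt => /orP[/eqP ->|iL].
    by rewrite itv_rcons_last (le_trans ax (le_trans xp1 _)).
  by rewrite itv_rcons //; have [? ?] := inL i iL; split => //; exact: le_trans xy.
- move=> i; rewrite size_rcons ltnS leq_eqVlt => /orP[/eqP ->|iL].
    by rewrite itv_rcons_last.
  by rewrite itv_rcons //; exact: LO.
Qed.

Lemma itvs_length_le_measure {a y O L} : itvs_within a y O L -> measurable O ->
  ((itvs_length L)%:E <= mu O)%E.
Proof.
move=> [sL _ LO] mO; have [mU <-] := itvs_union_measure L sL.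
apply: le_measure; rewrite ?inE // => z [i iL zi].
by apply: (LO i iL); rewrite /= in_itv.
Qed.

Lemma itvs_variation_lt {a b f O L y e del} :
  (forall (n : nat) (s : 'I_n -> R * R),
      (forall i, a <= (s i).1 /\ (s i).1 <= (s i).2 /\ (s i).2 <= b) ->
      (forall i j, i != j -> (s i).2 <= (s j).1 \/ (s j).2 <= (s i).1) ->
      \sum_(i < n) ((s i).2 - (s i).1) < del ->
      \sum_(i < n) `|f (s i).2 - f (s i).1| < e) ->
  itvs_within a y O L -> y <= b -> measurable O -> (mu O < del%:E)%E ->
  itvs_variation f L < e.
Proof.
move=> acf wL yb mO muO; have [[sorted le12] inL _] := wL.
apply: (acf (size L) (fun i => itv L i)).
- move=> i; have [? ?] := inL i (ltn_ord i); split => //; split; first exact: le12.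
  exact: le_trans yb.
- move=> i j; rewrite neq_ltn => /orP[ij|ji].
    by left; apply: sorted; rewrite ij ltn_ord.
  by right; apply: sorted; rewrite ji ltn_ord.
- by rewrite -lte_fin (le_lt_trans (itvs_length_le_measure wL mO)).
Qed.

Lemma itvs_variation_rcons f L p :
  itvs_variation f (rcons L p) = itvs_variation f L + `|f p.2 - f p.1|.
Proof. exact: (big_ord_rcons _ _ _ (fun q : R * R => `|f q.2 - f q.1|)). Qed.

End IntervalFamilies.

Section RealLine.
Context {R : realType}.
Notation mu := (@lebesgue_measure R).

Lemma continuous_induction {a b : R} {P : R -> Prop} : a <= b -> P a ->
  (forall x y, y <= x -> P x -> P y) ->
  (forall s, a <= s -> s <= b -> (forall y, a <= y -> y < s -> P y) ->
     exists2 del, 0 < del & forall x v, a <= x -> x <= s -> s <= v -> v <= b ->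
       v - x < del -> P x -> P v) ->
  P b.
Proof.
move=> ab Pa Pdown Pext.
pose S := [set x | x <= b /\ P x].
have S0 : S !=set0 by exists a.
have supS : has_sup S by split => //; exists b => x [].
set s := sup S.
have a_s : a <= s by apply: sup_upper_bound.
have s_b : s <= b by apply: ge_sup => // x [].
have Pbelow y : a <= y -> y < s -> P y.
  move=> ay ys; have ys0 : 0 < s - y by rewrite subr_gt0.
  have [x [_ Px] sx] := sup_adherent ys0 supS.
  by apply: Pdown Px; move: sx; rewrite -/s; lra.
have [del del_gt0 ext] := Pext s a_s s_b Pbelow.
have [x [ax xs sx Px]] : exists x, [/\ a <= x, x <= s, s - x < del / 2 & P x].
  have [<-|sa] := eqVneq a s; first by exists a; rewrite subrr divr_gt0.
  have a_lt_s : a < s by rewrite lt_def eq_sym sa a_s.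
  pose x := Num.max a (s - del / 4).
  have ax : a <= x by rewrite le_max lexx.
  have x_ge : s - del / 4 <= x by rewrite le_max lexx orbT.
  have xs : x < s by rewrite gt_max a_lt_s ltrBlDr ltrDl divr_gt0.
  by exists x; split => //; [exact: ltW | lra | exact: Pbelow].
have Ps : P s by apply: (ext x s) => //; lra.
have [<-//|sb] := eqVneq s b.
have s_lt_b : s < b by rewrite lt_neqAle sb s_b.
pose v := Num.min b (s + del / 4).
have sv : s < v by rewrite lt_min s_lt_b ltrDl divr_gt0.
have v_le : v <= s + del / 4 by rewrite ge_min lexx orbT.
have vb : v <= b by rewrite ge_min lexx.
have Pv : P v by apply: (ext x v) => //; [exact: ltW | lra].
by have := sup_upper_bound supS (conj vb Pv); rewrite leNgt sv.
Qed.


Lemma negligible_open_cover {N : set R} {e : R} : mu.-negligible N -> 0 < e ->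
  exists U, [/\ open U, N `<=` U & (mu U < e%:E)%E].
Proof.
move=> [M [mM M0 NM]] e_gt0.
have Mfin : (mu M < +oo)%E by rewrite M0 ltry.
have [U [oU MU UM]] := lebesgue_regularity_outer mM Mfin e_gt0.
exists U; split => //; first exact: subset_trans MU.
have mU : measurable U by exact: measurable_realfun.open_measurable.
apply: le_lt_trans UM; rewrite -{1}(setDUK MU) measureU //.
- by change (mu M + mu (U `\` M) <= mu (U `\` M))%E; rewrite M0 add0e.
- exact: measurableD.
- by rewrite setDIK.
Qed.

Lemma abs_cont_real_le0_left {a b : R} {f : R -> R} {s : R} :
  abs_cont_real a b f -> a < s -> s <= b ->
  (forall y, a <= y -> y < s -> f y < 0) -> f s <= 0.
Proof.
move=> acf a_lt_s sb fneg; rewrite leNgt; apply/negP => fs_gt0.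
have [del del_gt0 acd] := acf (f s) fs_gt0.
pose y := Num.max a (s - del / 2).
have ay : a <= y by rewrite le_max lexx.
have ys : y < s by rewrite gt_max a_lt_s ltrBlDr ltrDl divr_gt0.
have y_ge : s - del / 2 <= y by rewrite le_max lexx orbT.
clearbody y.
have inside (i : 'I_1) : a <= y /\ y <= s /\ s <= b by split => //; split => //; exact: ltW.
have disjoint (i j : 'I_1) : i != j -> s <= y \/ s <= y by rewrite !ord1 eqxx.
have short : \sum_(i < 1) (s - y) < del by rewrite big_ord1; clear -y_ge del_gt0; lra.
have := acd 1 (fun=> (y, s)) inside disjoint short; rewrite big_ord1 /= => var_lt.
have := ler_norm (f s - f y); have := fneg y ay ys.
by clear -var_lt; lra.
Qed.

End RealLine.

Section Barrier.
Context {R : realType}.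
Variables (a : R) (f : R -> R) (U : set R) (ep : R).

(* Off [U], [f] grows at slope at most [ep]; growth over [U], which will have small
   measure, is charged to the variation of [f] on a family of intervals of [U]. *)
Definition controlled_upto (x : R) := forall y, a <= y -> y <= x ->
  exists2 L, itvs_within a y U L & f y <= f a + ep * (y - a) + itvs_variation f L.

Lemma controlled_upto_start : controlled_upto a.
Proof.
move=> y ay ya; have -> : y = a by apply/eqP; rewrite eq_le ay ya.
by exists [::]; [exact: itvs_within_nil | rewrite subrr mulr0 addr0 /itvs_variation big_ord0 addr0].
Qed.

Lemma controlled_upto_le x y : y <= x -> controlled_upto x -> controlled_upto y.
Proof. by move=> yx Cx z az zy; apply: Cx; rewrite ?(le_trans zy). Qed.

Lemma controlled_upto_open x v : 0 <= ep -> a <= x -> `]x, v]%classic `<=` U ->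
  controlled_upto x -> controlled_upto v.
Proof.
move=> ep_ge0 ax xvU Cx y ay yv; have [yx|xy] := leP y x; first exact: Cx.
have [L wL fx] := Cx x ax (lexx x).
exists (rcons L (x, y)).
  apply: (itvs_within_rcons wL ax) => //=; first exact: ltW.
  move=> z; rewrite /= !in_itv /= => /andP[xz zy]; apply: xvU.
  by rewrite /= in_itv /= xz (le_trans zy).
rewrite itvs_variation_rcons /=; have := ler_norm (f y - f x).
have : ep * (x - a) <= ep * (y - a) by apply: ler_wpM2l; rewrite // lerD2r ltW.
by move: fx; lra.
Qed.

Lemma controlled_upto_slope x v : a <= x ->
  (forall y, x < y -> y <= v -> controlled_upto y \/ f y - f x <= ep * (y - x)) ->
  controlled_upto x -> controlled_upto v.
Proof.
move=> ax slope Cx y ay yv; have [yx|xy] := leP y x; first exact: Cx.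
have [Cy|fy] := slope y xy yv; first exact: Cy.
have [L wL fx] := Cx x ax (lexx x).
by exists L; [exact: itvs_within_widen (ltW xy) | move: fx; lra].
Qed.

End Barrier.
Arguments controlled_upto_open {R a f U ep x v}.
Arguments controlled_upto_slope {R a f U ep x v}.

Definition straddle_slope_le0 {R : realType} (a b : R) (f : R -> R) (t : R) :=
  forall e, 0 < e -> exists2 del, 0 < del & forall w v, a <= w -> w <= t ->
    t <= v -> v <= b -> v - w < del -> f v - f w <= e * (v - w).

Lemma abs_cont_barrier_lt0 {R : realType} {a b : R} {f : R -> R} {N : set R} :
  a <= b -> (@lebesgue_measure R).-negligible N -> f a < 0 -> abs_cont_real a b f ->
  (forall t, a <= t -> t <= b -> ~ N t -> f t <= 0 -> straddle_slope_le0 a b f t) ->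
  f b < 0.
Proof.
move=> ab negN fa_lt0 acf slope.
set eta := - f a / 2.
have eta_gt0 : 0 < eta by rewrite divr_gt0 // oppr_gt0.
have [dA dA_gt0 acA] := acf eta eta_gt0.
have [U [oU NU muU]] := negligible_open_cover negN dA_gt0.
have mU : measurable U by exact: measurable_realfun.open_measurable.
set ep := eta / (b - a + 1).
have ba1_gt0 : 0 < b - a + 1 by rewrite ltr_wpDl // subr_ge0.
have ep_gt0 : 0 < ep by rewrite divr_gt0.
have ep_ba : ep * (b - a) < eta by rewrite /ep mulrAC ltr_pdivrMr // ltr_pM2l // ltrDl.
suff /(_ b ab (lexx b)) [L wL fb] : controlled_upto a f U ep b.
  have := itvs_variation_lt acA wL (lexx b) mU muU.
  by move: fb ep_ba; rewrite /eta; lra.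
apply: (continuous_induction ab); first exact: controlled_upto_start.
  exact: controlled_upto_le.
move=> s a_s sb below.
have below_neg y : a <= y -> y < s -> f y < 0.
  move=> ay ys; have [L wL fy] := below y ay ys y ay (lexx y).
  have := itvs_variation_lt acA wL (ltW (lt_le_trans ys sb)) mU muU.
  have : ep * (y - a) <= ep * (b - a).
    by rewrite ler_pM2l // lerD2r (le_trans (ltW ys)).
  by move: fy ep_ba; rewrite /eta; lra.
have fs_le0 : f s <= 0.
  have [<-|sa] := eqVneq a s; first exact: ltW.
  by apply: abs_cont_real_le0_left acf _ sb below_neg; rewrite lt_def eq_sym sa.
have [Ns|nNs] := pselect (N s).
- have /oU /nbhs_ballP[r r_gt0 ballU] := NU s Ns.
  exists r => // x v ax xs sv _ vx; apply: controlled_upto_open (ltW ep_gt0) ax _.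
  move=> z; rewrite /= in_itv /= => /andP[xz zv]; apply: ballU.
  by rewrite /ball /= ltr_norml; apply/andP; split; lra.
- have [del del_gt0 slope_s] := slope s a_s sb nNs fs_le0 ep ep_gt0.
  exists del => // x v ax xs sv vb vx; apply: (controlled_upto_slope ax) => y xy yv.
  have [ys|sy] := ltP y s; first by left; apply: below => //; exact: le_trans ax (ltW xy).
  by right; apply: slope_s; rewrite ?(le_trans yv) //; lra.
Qed.

Section RealAbsCont.
Context {R : realType}.

Lemma uniform_delta (k : nat) (P : 'I_k -> R -> Prop) :
  (forall i, exists2 del, 0 < del & forall del', 0 < del' -> del' <= del -> P i del') ->
  exists2 del, 0 < del & forall i, P i del.
Proof.
move=> hP.
have hP' i : exists del, 0 < del /\ forall del', 0 < del' -> del' <= del -> P i del'.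
  by have [del ? ?] := hP i; exists del.
have [g hg] := boolp.choice hP'.
have min_gt0 : 0 < \big[Num.min/1]_(i < k) g i by apply: lt_bigmin => // i _; case: (hg i).
by exists (\big[Num.min/1]_(i < k) g i) => // i; apply: (hg i).2 => //; exact: bigmin_le.
Qed.

Lemma abs_cont_real_lipschitz (a b L : R) (g : R -> R) : 0 <= L ->
  (forall w v, a <= w -> w <= v -> v <= b -> `|g v - g w| <= L * (v - w)) ->
  abs_cont_real a b g.
Proof.
move=> L_ge0 lip e e_gt0; have L1_gt0 : 0 < L + 1 by rewrite ltr_wpDl.
exists (e / (L + 1)); first by rewrite divr_gt0.
move=> n s inside _ short.
have step i : `|g (s i).2 - g (s i).1| <= L * ((s i).2 - (s i).1).
  by have [? [? ?]] := inside i; exact: lip.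
apply: le_lt_trans (ler_sum _ (fun i _ => step i)) _; rewrite -mulr_sumr.
apply: le_lt_trans (ler_wpM2l L_ge0 (ltW short)) _.
by rewrite mulrA ltr_pdivrMr // [L * e]mulrC ltr_pM2l // ltrDl.
Qed.

Lemma abs_cont_realB (a b : R) (f g : R -> R) :
  abs_cont_real a b f -> abs_cont_real a b g -> abs_cont_real a b (fun t => f t - g t).
Proof.
move=> acf acg e e_gt0; have e2_gt0 : 0 < e / 2 by rewrite divr_gt0.
have [df df_gt0 hf] := acf _ e2_gt0; have [dg dg_gt0 hg] := acg _ e2_gt0.
exists (Num.min df dg); first by rewrite lt_min df_gt0.
move=> n s inside disj; rewrite lt_min => /andP[sf sg].
have step i : `|f (s i).2 - g (s i).2 - (f (s i).1 - g (s i).1)| <=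
    `|f (s i).2 - f (s i).1| + `|g (s i).2 - g (s i).1|.
  by rewrite (_ : _ - _ = (f (s i).2 - f (s i).1) - (g (s i).2 - g (s i).1)) ?ler_normB //; ring.
apply: le_lt_trans (ler_sum _ (fun i _ => step i)) _; rewrite big_split /=.
by have := hf n s inside disj sf; have := hg n s inside disj sg; lra.
Qed.

End RealAbsCont.

Section MaxNorm.
Context {R : realType} {d k : nat}.
Implicit Types (y z : 'I_k -> 'rV[R]_d).

Definition maxnorm y : R := \big[Num.max/0]_(i < k) enorm (y i).

Lemma maxnorm_ge0 y : 0 <= maxnorm y.
Proof.
apply: (big_ind (fun v => 0 <= v)) => // [p q p0 q0|i _]; first by rewrite le_max p0.
exact: enorm_ge0.
Qed.

Lemma enorm_le_maxnorm y i : enorm (y i) <= maxnorm y.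
Proof. exact: (le_bigmax _ (fun i => enorm (y i))). Qed.

Lemma maxnorm_lt y c : 0 < c -> (forall i, enorm (y i) < c) -> maxnorm y < c.
Proof. by move=> c_gt0 yc; apply: bigmax_lt. Qed.

Lemma maxnorm_le_add {y z} {c : R} : 0 <= c -> (forall i, enorm (y i - z i) <= c) ->
  maxnorm y <= maxnorm z + c.
Proof.
move=> c_ge0 yz; apply: bigmax_le => [|i _]; first by rewrite addr_ge0 // maxnorm_ge0.
rewrite -[y i](subrK (z i)) addrC (le_trans (enormD _ _)) //.
by rewrite lerD // enorm_le_maxnorm.
Qed.

Lemma maxnorm_dist y z : `|maxnorm y - maxnorm z| <= \sum_(i < k) enorm (y i - z i).
Proof.
have sum_ge0 : 0 <= \sum_(i < k) enorm (y i - z i) by apply: sumr_ge0 => i _; exact: enorm_ge0.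
have le_sum i : enorm (y i - z i) <= \sum_(i < k) enorm (y i - z i).
  by rewrite (bigD1 i) //= lerDl; apply: sumr_ge0 => j _; exact: enorm_ge0.
have := maxnorm_le_add sum_ge0 le_sum.
have : maxnorm z <= maxnorm y + \sum_(i < k) enorm (y i - z i).
  by apply: maxnorm_le_add sum_ge0 _ => i; rewrite enorm_subC.
by rewrite ler_norml; lra.
Qed.

Lemma abs_cont_maxnorm (a b : R) (x : 'I_k -> R -> 'rV[R]_d) :
  (forall i, abs_cont_on a b (x i)) -> abs_cont_real a b (fun t => maxnorm (x^~ t)).
Proof.
move=> acx e e_gt0; have k1_gt0 : 0 < k%:R + 1 :> R by rewrite ltr_wpDl.
set e' := e / (k%:R + 1); have e'_gt0 : 0 < e' by rewrite divr_gt0.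
pose small_var i del := forall (n : nat) (s : 'I_n -> R * R),
  (forall l, a <= (s l).1 /\ (s l).1 <= (s l).2 /\ (s l).2 <= b) ->
  (forall l l', l != l' -> (s l).2 <= (s l').1 \/ (s l').2 <= (s l).1) ->
  \sum_(l < n) ((s l).2 - (s l).1) < del ->
  \sum_(l < n) enorm (x i (s l).2 - x i (s l).1) < e'.
have [del del_gt0 acdel] : exists2 del, 0 < del & forall i, small_var i del.
  apply: uniform_delta => i; have [del del_gt0 acd] := acx i e' e'_gt0.
  by exists del => // del' _ del'_le n s ? ? short; apply: acd => //; exact: lt_le_trans del'_le.
exists del => // n s inside disj short.
apply: le_lt_trans (ler_sum _ (fun l _ => maxnorm_dist _ _)) _; rewrite exchange_big /=.
apply: le_lt_trans (ler_sum _ (fun i _ => ltW (acdel i n s inside disj short))) _.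
rewrite sumr_const card_ord -mulr_natl /e' mulrA ltr_pdivrMr //.
by rewrite [_ * e]mulrC ltr_pM2l // ltrDl.
Qed.

Lemma enorm_increment_le {f : R -> 'rV[R]_d} {t : R} : derivable f t 1 ->
  forall e, 0 < e -> exists2 del, 0 < del & forall w v, w <= t -> t <= v -> v - w < del ->
    enorm (f v - f w) <= (v - w) * (enorm ('D_1 f t) + e).
Proof.
move=> df e e_gt0; have [del del_gt0 rem] := derivable_remainder_enorm df _ e_gt0.
exists del => // w v wt tv vw.
have rem_v : enorm (f v - f t - (v - t) *: 'D_1 f t) <= e * (v - t).
  rewrite -[X in _ <= _ * X]ger0_norm ?subr_ge0 //; apply: rem.
  by rewrite ger0_norm ?subr_ge0 //; lra.
have rem_w : enorm (f w - f t - (w - t) *: 'D_1 f t) <= e * (t - w).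
  rewrite -[X in _ <= _ * X]ger0_norm ?subr_ge0 // -normrN opprB; apply: rem.
  by rewrite -normrN opprB ger0_norm ?subr_ge0 //; lra.
set D := 'D_1 f t.
have inc_v : enorm (f v - f t) <= e * (v - t) + (v - t) * enorm D.
  rewrite -[f v - f t](subrK ((v - t) *: D)) (le_trans (enormD _ _)) //.
  by rewrite enormZ ger0_norm ?subr_ge0 // lerD2r.
have inc_w : enorm (f w - f t) <= e * (t - w) + (t - w) * enorm D.
  rewrite -[f w - f t](subrK ((w - t) *: D)) (le_trans (enormD _ _)) //.
  by rewrite enormZ -normrN opprB ger0_norm ?subr_ge0 // lerD2r.
have : enorm (f v - f w) <= enorm (f v - f t) + enorm (f w - f t).
  have -> : f v - f w = (f v - f t) + (f t - f w) by rewrite addrA subrK.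
  by rewrite (le_trans (enormD _ _)) // [enorm (f t - _)]enorm_subC.
by move: inc_v inc_w; lra.
Qed.

Lemma maxnorm_local_growth (x : 'I_k -> R -> 'rV[R]_d) (t B : R) : 0 <= B ->
  (forall i, derivable (x i) t 1) -> (forall i, enorm ('D_1 (x i) t) <= B) ->
  forall e, 0 < e -> exists2 del, 0 < del & forall w v, w <= t -> t <= v -> v - w < del ->
    maxnorm (x^~ v) <= maxnorm (x^~ w) + (v - w) * (B + e).
Proof.
move=> B_ge0 dx Dx e e_gt0.
pose close i del := forall w v, w <= t -> t <= v -> v - w < del ->
  enorm (x i v - x i w) <= (v - w) * (enorm ('D_1 (x i) t) + e).
have [del del_gt0 inc] : exists2 del, 0 < del & forall i, close i del.
  apply: uniform_delta => i; have [del del_gt0 inc] := enorm_increment_le (dx i) _ e_gt0.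
  by exists del => // del' _ del'_le w v wt tv vw; apply: inc => //; exact: lt_le_trans del'_le.
exists del => // w v wt tv vw; have vw_ge0 : 0 <= v - w by rewrite subr_ge0 (le_trans wt).
apply: maxnorm_le_add => [|i]; first by rewrite mulr_ge0 // addr_ge0 // ltW.
by rewrite (le_trans (inc i w v wt tv vw)) // ler_wpM2l // lerD2r.
Qed.

End MaxNorm.

Section Exponential.
Context {R : realType}.

Lemma expR_increment_le {C w v : R} : 0 <= C -> w <= v ->
  expR (C * v) - expR (C * w) <= C * (v - w) * expR (C * v).
Proof.
move=> C_ge0 wv; have := expR_ge1Dx (- (C * (v - w))).
have -> : expR (C * w) = expR (C * v) * expR (- (C * (v - w))).
  by rewrite -expRD; congr expR; ring.
by have := expR_gt0 (C * v); nra.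
Qed.

(* The extra [+ 1] in the rate absorbs the second-order terms of [expR]. *)
Lemma expR_increment_ge {K w t v : R} : 0 <= K -> w <= t -> t <= v ->
  K * (K + 1) * (v - w) <= 1 ->
  (v - w) * K * expR ((K + 1) * t) <= expR ((K + 1) * v) - expR ((K + 1) * w).
Proof.
move=> K_ge0 wt tv short; set C := K + 1.
set E := expR (C * (t - w)); set F := expR (C * (v - t)); set A := expR (C * w).
have hE : 1 + C * (t - w) <= E := expR_ge1Dx _.
have hF : 1 + C * (v - t) <= F := expR_ge1Dx _.
have A_gt0 : 0 < A := expR_gt0 _.
have E_gt0 : 0 < E := expR_gt0 _.
have -> : expR (C * t) = A * E by rewrite -expRD; congr expR; ring.
have -> : expR (C * v) = A * E * F by rewrite -!expRD; congr expR; ring.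
have tw_ge0 : 0 <= t - w by rewrite subr_ge0.
have vt_ge0 : 0 <= v - t by rewrite subr_ge0.
have left_part : K * (t - w) * E <= E - 1.
  have : K * C * (t - w) <= 1.
    by apply: le_trans short; apply: ler_wpM2l; [rewrite mulr_ge0 // addr_ge0 | lra].
  rewrite /C in hE * => short_tw.
  have : K * (t - w) <= 1 by nra.
  nra.
have right_part : K * (v - t) * E <= E * F - E by rewrite /C in hF; nra.
have : (v - w) * K * E <= E * F - 1 by lra.
by nra.
Qed.

Lemma straddle_slope_exp {u : R -> R} {K c a b t : R} : 0 <= K -> 0 <= c ->
  1 + u t <= c * expR ((K + 1) * t) ->
  (forall e, 0 < e -> exists2 del, 0 < del & forall w v, w <= t -> t <= v -> v - w < del ->
     u v <= u w + (v - w) * (K * (1 + u t) + e)) ->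
  straddle_slope_le0 a b (fun s => u s - (c * expR ((K + 1) * s) - 1)) t.
Proof.
move=> K_ge0 c_ge0 ut growth e e_gt0.
have [del1 del1_gt0 grow] := growth e e_gt0.
have KK1_gt0 : 0 < K * (K + 1) + 1 by rewrite ltr_wpDl // mulr_ge0 // addr_ge0.
exists (Num.min del1 (1 / (K * (K + 1) + 1))); first by rewrite lt_min del1_gt0 divr_gt0.
move=> w v _ wt tv _; rewrite lt_min => /andP[vw1 vw2].
have vw_ge0 : 0 <= v - w by rewrite subr_ge0 (le_trans wt).
have short : K * (K + 1) * (v - w) <= 1.
  by move: vw2; rewrite ltr_pdivlMr // => ?; nra.
have := ler_wpM2l c_ge0 (expR_increment_ge K_ge0 wt tv short).
have : (v - w) * K * (1 + u t) <= (v - w) * K * (c * expR ((K + 1) * t)).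
  by apply: ler_wpM2l => //; rewrite mulr_ge0.
have := grow w v wt tv vw1.
by nra.
Qed.

Lemma abs_cont_real_expR (a b c C : R) : 0 <= c -> 0 <= C ->
  abs_cont_real a b (fun t => c * expR (C * t) - 1).
Proof.
move=> c_ge0 C_ge0; apply: (@abs_cont_real_lipschitz _ _ _ (c * C * expR (C * b))).
  by rewrite !mulr_ge0 ?expR_ge0.
move=> w v _ wv vb.
have exp_wv : expR (C * w) <= expR (C * v) by rewrite ler_expR ler_wpM2l.
have exp_vb : expR (C * v) <= expR (C * b) by rewrite ler_expR ler_wpM2l.
rewrite opprB addrA subrK -mulrBr normrM !ger0_norm ?subr_ge0 // -!mulrA.
apply: ler_wpM2l => //; apply: le_trans (expR_increment_le C_ge0 wv) _.
by rewrite -mulrA ler_wpM2l // mulrC ler_wpM2r // subr_ge0.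
Qed.

End Exponential.

Lemma maxnorm_gronwall {R : realType} {d k : nat} {x : 'I_k -> R -> 'rV[R]_d} {K c T : R}
    {N : set R} :
  0 <= K -> 0 <= T -> (@lebesgue_measure R).-negligible N ->
  (forall i, abs_cont_on 0 T (x i)) -> 1 + maxnorm (x^~ 0) < c ->
  (forall t, 0 <= t -> t <= T -> ~ N t -> forall i,
     derivable (x i) t 1 /\ enorm ('D_1 (x i) t) <= K * (1 + maxnorm (x^~ t))) ->
  1 + maxnorm (x^~ T) < c * expR ((K + 1) * T).
Proof.
move=> K_ge0 T_ge0 negN acx start flow.
have c_gt0 : 0 < c by apply: le_lt_trans start; rewrite addr_ge0 ?maxnorm_ge0.
have C_ge0 : 0 <= K + 1 by rewrite addr_ge0.
pose f t := maxnorm (x^~ t) - (c * expR ((K + 1) * t) - 1).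
suff : f T < 0 by rewrite /f; lra.
apply: (abs_cont_barrier_lt0 T_ge0 negN).
- by rewrite /f mulr0 expR0 mulr1; lra.
- apply: abs_cont_realB; first exact: abs_cont_maxnorm.
  exact: abs_cont_real_expR (ltW c_gt0) C_ge0.
- move=> t t_ge0 tT nNt f_le0; have flow_t := flow t t_ge0 tT nNt.
  apply: (straddle_slope_exp K_ge0 (ltW c_gt0)); first by move: f_le0; rewrite /f; lra.
  apply: maxnorm_local_growth => [|i|i]; [|exact: (flow_t i).1|exact: (flow_t i).2].
  by rewrite mulr_ge0 // addr_ge0 // maxnorm_ge0.
Qed.

Section Drift.
Context {R : realType} {d k : nat}.
Notation vec := 'rV[R]_d.
Context {W V : vec -> R} {C0 : R} {m : 'I_k -> R}.
Hypotheses (C0_ge0 : 0 <= C0) (m_ge0 : forall j, 0 <= m j) (m_sum1 : \sum_(j < k) m j = 1).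
Hypothesis gradW : forall x, enorm (grad W x) <= C0 * (1 + enorm x).
Hypothesis gradV : forall x, enorm (grad V x) <= C0 * (1 + enorm x).

Definition drift (y : 'I_k -> vec) i : vec :=
  - (\sum_(j < k) m j *: grad W (y i - y j)) - grad V (y i).

Lemma drift_enorm_le y i : enorm (drift y i) <= 3 * C0 * (1 + maxnorm y).
Proof.
have u_ge0 := maxnorm_ge0 y.
have interaction : enorm (\sum_(j < k) m j *: grad W (y i - y j)) <= C0 * (1 + 2 * maxnorm y).
  rewrite (le_trans (enorm_sum _ _ _ _)) //.
  rewrite -[X in _ <= X]mul1r -{1}m_sum1 mulr_suml; apply: ler_sum => j _.
  rewrite enormZ ger0_norm //; apply: ler_wpM2l; first exact: m_ge0.
  apply: le_trans (gradW _) _; apply: ler_wpM2l => //; rewrite lerD2l.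
  apply: le_trans (enormB _ _) _.
  by have := enorm_le_maxnorm y i; have := enorm_le_maxnorm y j; lra.
have confinement : enorm (grad V (y i)) <= C0 * (1 + maxnorm y).
  by apply: le_trans (gradV _) _; apply: ler_wpM2l; rewrite // lerD2l enorm_le_maxnorm.
apply: le_trans (enormB _ _) _; rewrite enormN.
by move: interaction confinement C0_ge0; lra.
Qed.

Lemma tcone_0 {K : set vec} {x : vec} : K x -> tcone K x 0.
Proof. by move=> Kx; apply: subset_closure; exists 0, x; rewrite scale0r. Qed.

Lemma nearest_enorm_le {S : set vec} {w D : vec} : S 0 -> nearest S w D ->
  enorm D <= 2 * enorm w.
Proof.
move=> S0 [_ closest]; have := closest 0 S0; rewrite subr0 => wD.
have -> : D = w - (w - D) by rewrite opprB addrC subrK.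
by apply: le_trans (enormB _ _) _; lra.
Qed.

Lemma velocity_enorm_le {Omega : set vec} {y i D} : Omega (y i) ->
  nearest (tcone Omega (y i)) (drift y i) D -> enorm D <= 6 * C0 * (1 + maxnorm y).
Proof.
move=> Oy /(nearest_enorm_le (tcone_0 Oy)) /le_trans; apply.
have -> : 6 * C0 * (1 + maxnorm y) = 2 * (3 * C0 * (1 + maxnorm y)) by ring.
by rewrite ler_pM2l // drift_enorm_le.
Qed.

End Drift.

Theorem lemma4p3 (R : realType) (d : nat) (Omega : set 'rV[R]_d)
  (W V : 'rV[R]_d -> R) (lamW lamV C0 : R) :
  closed Omega -> convex_set Omega -> Omega !=set0 ->
  ~ (exists r : R, Omega `<=` eball0 r) ->
  C1 W -> C1 V ->
  lam_convex_on (diffset Omega) lamW W ->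
  lam_convex_on Omega lamV V ->
  (forall x, enorm (grad W x) <= C0 * (1 + enorm x)) ->
  (forall x, enorm (grad V x) <= C0 * (1 + enorm x)) ->
  exists2 C : R, 0 < C &
    forall (n k : nat) (x0 : 'I_k -> 'rV[R]_d) (m : 'I_k -> R)
           (x : 'I_k -> R -> 'rV[R]_d),
      (forall i, Omega (x0 i) /\ eball0 n%:R (x0 i)) ->
      (forall i, 0 <= m i) -> \sum_(i < k) m i = 1 ->
      (forall i, loc_abs_cont (x i)) ->
      (forall i t, 0 <= t -> Omega (x i t)) ->
      (forall i, x i 0 = x0 i) ->
      (forall i, {ae lebesgue_measure, forall t : R, 0 <= t ->
         derivable (x i) t 1 /\
         nearest (tcone Omega (x i t))
           (- (\sum_(j < k) m j *: grad W (x i t - x j t)) - grad V (x i t))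
           ('D_1 (x i) t)}) ->
      exists r : R -> R, forall t : R, 0 <= t ->
        r t <= (n%:R + 1) * expR (C * t) /\
        supp_emp m (fun i => x i t) `<=` Omega `&` eball0 (r t).
Proof.
move=> _ _ _ _ _ _ _ _ gradW gradV.
have C0_ge0 : 0 <= C0.
  by have := gradV 0; rewrite enorm0 addr0 mulr1; apply: le_trans; exact: enorm_ge0.
have K_ge0 : 0 <= 6 * C0 by rewrite mulr_ge0.
exists (6 * C0 + 1) => [|n k x0 m x x0_in m_ge0 m_sum1 acx x_in x_0 flow].
  by rewrite ltr_wpDl.
(* a point [x0 i0] exists, so [n > 0]: the max over no points would be [0] *)
have [i0 _] : exists i0 : 'I_k, true && (0 < m i0).
  by apply: psumr_neq0P => //; rewrite m_sum1; apply/eqP; rewrite oner_neq0.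
have start : 1 + maxnorm (x^~ 0) < n%:R + 1.
  rewrite addrC ltrD2r; apply: maxnorm_lt => [|i]; last by rewrite x_0; case: (x0_in i).
  by apply: le_lt_trans (x0_in i0).2; exact: enorm_ge0.
have /(filter_forall (ae_filter_ringOfSetsType _)) flow_ae := flow.
have gronwall T : 0 <= T -> 1 + maxnorm (x^~ T) < (n%:R + 1) * expR ((6 * C0 + 1) * T).
  move=> T_ge0; apply: (maxnorm_gronwall K_ge0 T_ge0 flow_ae (fun i => acx i T T_ge0) start).
  move=> s s_ge0 _ /contrapT flow_s i; have [dx near] := flow_s i s_ge0; split=> //.
  exact: (velocity_enorm_le (y := x^~ s) C0_ge0 m_ge0 m_sum1 gradW gradV (x_in i s s_ge0) near).
exists (fun t => (n%:R + 1) * expR ((6 * C0 + 1) * t)) => t t_ge0; split => // y [i [_ ->]].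
split; first exact: x_in.
apply: le_lt_trans (enorm_le_maxnorm (x^~ t) i) (lt_trans _ (gronwall t t_ge0)).
by rewrite ltrDr.
Qed.
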